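(* Let $f:H\to\mathbb{R}\cup\{+\infty\}$ be proper, lower semicontinuous, and have the K\L{} property at a global minimum $x^*$ of $f$. Fix $\underline a>0$ and $M>0$. Then there exist $\gamma>0$ and $\eta>0$ such that every sequence $(x^k)$ satisfying $\mathbf{H}_1$, $\mathbf{H}_2$, $\mathbf{H}_3$ with $\varepsilon_k=0$ for all $k$, $a_k\ge\underline a$ for all $k$, $\sup_{k\ge1}\frac{1}{a_kb_k}\le M$, and $x^0\in\underline{\Gamma}_\eta(x^*,\gamma)$, $f$-converges to a global minimum $\bar x$ of $f$ and satisfies $\sum_{k=0}^{+\infty}\|x^{k+1}-x^k\|<+\infty$.
   Context: Subdifferential $\partial f$ (limiting Fréchet), lazy slope $\|\partial f(x)\|_-=\inf_{p\in\partial f(x)}\|p\|$ ($+\infty$ if $\partial f(x)=\emptyset$), $f$-convergence ($x^k\to x$ and $f(x^k)\to f(x)$). A desingularizing function is a continuous concave $\varphi:[0,\eta_0[\to[0,+\infty[$ with $\varphi(0)=0$, $C^1$ on $]0,\eta_0[$ with $\varphi'>0$. $f$ has the K\L{} property at $x^*$ with desingularizing $\varphi$ if there is $\delta>0$ with $\varphi'(f(x)-f(x^* ))\|\partial f(x)\|_-\ge1$ for all $x\in\Gamma_{\eta_0}(x^*,\delta)=\{x:\|x-x^*\|<\delta,\ f(x^* )<f(x)<f(x^* )+\eta_0\}$. Relaxed local upper level set: $\underline{\Gamma}_\eta(x^*,\gamma)=\{x\in H:\|x-x^*\|<\gamma,\ f(x^* )\le f(x)<f(x^* )+\eta\}$.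 $\mathbf{H}_1$: $f(x^{k+1})+a_k\|x^{k+1}-x^k\|^2\le f(x^k)$, $a_k>0$. $\mathbf{H}_2$: $b_{k+1}\|\partial f(x^{k+1})\|_-\le\|x^{k+1}-x^k\|+\varepsilon_{k+1}$, $b_{k+1}>0$, $\varepsilon_{k+1}\ge0$. $\mathbf{H}_3$: (i) $a_k\ge\underline a>0$; (ii) $(b_k)\notin\ell^1$; (iii) $\sup_{k\ge1}\frac1{a_kb_k}<\infty$; (iv) $(\varepsilon_k)\in\ell^1$. *)

From Stdlib Require Import Reals Lra ClassicalEpsilon.
Open Scope R_scope.

Record Hilbert := {
  carrier :> Type;
  hzero : carrier;
  hplus : carrier -> carrier -> carrier;
  hopp : carrier -> carrier;
  hscal : R -> carrier -> carrier;
  inner : carrier -> carrier -> R;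
  hplus_assoc : forall x y z, hplus x (hplus y z) = hplus (hplus x y) z;
  hplus_comm : forall x y, hplus x y = hplus y x;
  hplus_zero : forall x, hplus x hzero = x;
  hplus_opp : forall x, hplus x (hopp x) = hzero;
  hscal_assoc : forall a b x, hscal a (hscal b x) = hscal (a * b) x;
  hscal_one : forall x, hscal 1 x = x;
  hscal_distr_l : forall a x y, hscal a (hplus x y) = hplus (hscal a x) (hscal a y);
  hscal_distr_r : forall a b x, hscal (a + b) x = hplus (hscal a x) (hscal b x);
  inner_sym : forall x y, inner x y = inner y x;
  inner_plus_l : forall x y z, inner (hplus x y) z = inner x z + inner y z;
  inner_scal_l : forall a x y, inner (hscal a x) y = a * inner x y;
  inner_pos : forall x, 0 <= inner x x;
  inner_def : forall x, inner x x = 0 -> x = hzero;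
  hcomplete : forall u : nat -> carrier,
    (forall eps, 0 < eps -> exists N, forall m n, (N <= m)%nat -> (N <= n)%nat ->
        sqrt (inner (hplus (u m) (hopp (u n))) (hplus (u m) (hopp (u n)))) < eps) ->
    exists l, forall eps, 0 < eps -> exists N, forall n, (N <= n)%nat ->
        sqrt (inner (hplus (u n) (hopp l)) (hplus (u n) (hopp l))) < eps
}.

Arguments hplus {h}. Arguments hopp {h}. Arguments inner {h}.

Definition hminus {H : Hilbert} (x y : H) : H := hplus x (hopp y).
Definition norm {H : Hilbert} (x : H) : R := sqrt (inner x x).

Lemma norm_nonneg {H : Hilbert} (x : H) : 0 <= norm x.
Proof. unfold norm; apply sqrt_pos. Qed.

Definition hcv {H : Hilbert} (u : nat -> H) (l : H) : Prop :=
  forall eps, 0 < eps -> exists N, forall n, (N <= n)%nat -> norm (hminus (u n) l) < eps.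

Inductive ereal := Fin : R -> ereal | PInf : ereal.

Definition ele (x y : ereal) : Prop :=
  match x, y with
  | Fin a, Fin b => a <= b
  | _, PInf => True
  | PInf, Fin _ => False
  end.

Definition elt (x y : ereal) : Prop :=
  match x, y with
  | Fin a, Fin b => a < b
  | Fin _, PInf => True
  | PInf, _ => False
  end.

Definition eplus (e : ereal) (r : R) : ereal :=
  match e with Fin a => Fin (a + r) | PInf => PInf end.

(* c * e for a real c > 0 (with c * (+oo) = +oo) *)
Definition emul_pos (c : R) (e : ereal) : ereal :=
  match e with Fin a => Fin (c * a) | PInf => PInf end.

Definition ecv (u : nat -> ereal) (l : ereal) : Prop :=
  match l with
  | Fin L => forall eps, 0 < eps -> exists N, forall n, (N <= n)%nat ->
               exists r, u n = Fin r /\ Rabs (r - L) < eps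
  | PInf => forall M, exists N, forall n, (N <= n)%nat -> elt (Fin M) (u n)
  end.

Definition proper {H : Hilbert} (f : H -> ereal) : Prop := exists x, f x <> PInf.

Definition lsc {H : Hilbert} (f : H -> ereal) : Prop :=
  forall x r, elt (Fin r) (f x) ->
    exists delta, 0 < delta /\ forall y, norm (hminus y x) < delta -> elt (Fin r) (f y).

Definition global_min {H : Hilbert} (f : H -> ereal) (xs : H) : Prop :=
  forall y, ele (f xs) (f y).

(* Frechet subdifferential: p such that
   liminf_{y->x, y<>x} (f y - f x - <p, y - x>)/||y - x|| >= 0, x in dom f *)
Definition frechet_subdiff {H : Hilbert} (f : H -> ereal) (x p : H) : Prop :=
  match f x with
  | Fin fx => forall eps, 0 < eps -> exists delta, 0 < delta /\
      forall y, norm (hminus y x) < delta ->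
        ele (Fin (fx + inner p (hminus y x) - eps * norm (hminus y x))) (f y)
  | PInf => False
  end.

Definition subdiff {H : Hilbert} (f : H -> ereal) (x p : H) : Prop :=
  f x <> PInf /\
  exists (xn pn : nat -> H),
    hcv xn x /\ ecv (fun n => f (xn n)) (f x) /\
    (forall n, frechet_subdiff f (xn n) (pn n)) /\ hcv pn p.

(* lazy slope ||∂f(x)||_- = inf { ||p|| : p ∈ ∂f(x) }, +oo if ∂f(x) = ∅ *)
Section Slope.
Context {H : Hilbert} (f : H -> ereal) (x : H).
Let E : R -> Prop := fun r => exists p, subdiff f x p /\ r = - norm p.
Let E_bound : bound E.
Proof. exists 0. intros r [p [_ ->]]. pose proof (norm_nonneg p). lra. Qed.
Let E_ne : (exists p, subdiff f x p) -> exists r, E r.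
Proof. intros [p hp]. exists (- norm p). exists p. split; auto. Qed.
Definition lazy_slope : ereal :=
  match excluded_middle_informative (exists p, subdiff f x p) with
  | left h => Fin (- proj1_sig (completeness E E_bound (E_ne h)))
  | right _ => PInf
  end.
End Slope.

Definition desingularizing (eta0 : R) (phi dphi : R -> R) : Prop :=
  0 < eta0 /\
  phi 0 = 0 /\
  (forall t, 0 <= t < eta0 -> 0 <= phi t) /\
  (forall t, 0 <= t < eta0 -> forall eps, 0 < eps -> exists delta, 0 < delta /\
      forall s, 0 <= s < eta0 -> Rabs (s - t) < delta -> Rabs (phi s - phi t) < eps) /\
  (forall s t lam, 0 <= s < eta0 -> 0 <= t < eta0 -> 0 <= lam <= 1 ->
      lam * phi s + (1 - lam) * phi t <= phi (lam * s + (1 - lam) * t)) /\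
  (forall t, 0 < t < eta0 ->
      derivable_pt_lim phi t (dphi t) /\ continuity_pt dphi t /\ 0 < dphi t).

Definition Gamma {H : Hilbert} (f : H -> ereal) (xs : H) (eta delta : R) (x : H) : Prop :=
  norm (hminus x xs) < delta /\ elt (f xs) (f x) /\ elt (f x) (eplus (f xs) eta).

Definition Gamma_relaxed {H : Hilbert} (f : H -> ereal) (xs : H) (eta gamma : R) (x : H) : Prop :=
  norm (hminus x xs) < gamma /\ ele (f xs) (f x) /\ elt (f x) (eplus (f xs) eta).

Definition KL_at {H : Hilbert} (f : H -> ereal) (xs : H) : Prop :=
  exists eta0 phi dphi delta,
    desingularizing eta0 phi dphi /\ 0 < delta /\
    forall x, Gamma f xs eta0 delta x ->
      forall r s, f x = Fin r -> f xs = Fin s ->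
        ele (Fin 1) (emul_pos (dphi (r - s)) (lazy_slope f x)).

Definition f_converges {H : Hilbert} (f : H -> ereal) (u : nat -> H) (l : H) : Prop :=
  hcv u l /\ ecv (fun k => f (u k)) (f l).

From Stdlib Require Import Reals Lra Psatz Classical.
Open Scope R_scope.

(* While the iterates stay in the KL neighbourhood of [xs], sufficient
   decrease (H1), the slope bound (H2) and concavity of the desingularizing function [phi] give
     2 d_(k+1) <= d_k + M (phi (f x_(k+1) - f xs) - phi (f x_(k+2) - f xs)),   d_k = |x_(k+1) - x_k|.
   Telescoping bounds the length of the trajectory by a quantity that is small when [x 0] is
   close to [xs] in position and value, and this bound in turn keeps every iterate in the
   neighbourhood. Finite length makes [x] Cauchy, with limit [xbar]. If the values stayed above
   [f xs + eps], the KL inequality would give b_(k+1) <= phi' eps * d_k, contradicting the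
   divergence of the b's; so the values tend to [min f], and lower semicontinuity makes [xbar] a
   global minimiser reached in value. *)

Lemma inner_zero_l {H : Hilbert} (y : H) : inner (hzero H) y = 0.
Proof.
  pose proof (inner_plus_l H (hzero H) (hzero H) y) as E.
  rewrite hplus_zero in E. lra.
Qed.

Lemma inner_plus_r {H : Hilbert} (x y z : H) : inner x (hplus y z) = inner x y + inner x z.
Proof. rewrite inner_sym, inner_plus_l, (inner_sym H y), (inner_sym H z). reflexivity. Qed.

Lemma inner_scal_r {H : Hilbert} a (x y : H) : inner x (hscal H a y) = a * inner x y.
Proof. rewrite inner_sym, inner_scal_l, inner_sym. reflexivity. Qed.

Lemma inner_opp_l {H : Hilbert} (x y : H) : inner (hopp x) y = - inner x y.
Proof.
  pose proof (inner_plus_l H x (hopp x) y) as E. rewrite hplus_opp, inner_zero_l in E. lra.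
Qed.

Lemma hplus_hminus {H : Hilbert} (x y z : H) : hplus (hminus x y) (hminus y z) = hminus x z.
Proof.
  unfold hminus. rewrite hplus_assoc. f_equal.
  rewrite <- hplus_assoc, (hplus_comm H (hopp y) y), hplus_opp, hplus_zero. reflexivity.
Qed.

Lemma hopp_unique {H : Hilbert} (a b : H) : hplus a b = hzero H -> b = hopp a.
Proof.
  intro E. rewrite <- (hplus_zero H b), <- (hplus_opp H a), hplus_assoc,
    (hplus_comm H b a), E, hplus_comm, hplus_zero. reflexivity.
Qed.

Lemma norm_hminus_sym {H : Hilbert} (x y : H) : norm (hminus x y) = norm (hminus y x).
Proof.
  assert (E : hminus y x = hopp (hminus x y)).
  { apply hopp_unique. rewrite hplus_hminus. apply hplus_opp. }
  unfold norm. rewrite E, inner_opp_l, (inner_sym H (hminus x y) (hopp _)), inner_opp_l, Ropp_involutive.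
  reflexivity.
Qed.

Lemma norm_hminus_self {H : Hilbert} (x : H) : norm (hminus x x) = 0.
Proof. unfold norm, hminus. rewrite hplus_opp, inner_zero_l. apply sqrt_0. Qed.

Lemma cauchy_schwarz {H : Hilbert} (u v : H) : inner u v <= norm u * norm v.
Proof.
  unfold norm.
  pose proof (inner_pos H u) as Hu. pose proof (inner_pos H v) as Hv.
  destruct (Req_dec (inner v v) 0) as [E|E].
  - apply inner_def in E. subst v. rewrite inner_sym, inner_zero_l.
    apply Rmult_le_pos; apply sqrt_pos.
  - (* expand 0 <= <u + t v, u + t v> at the minimising t *)
    set (t := - inner u v / inner v v).
    pose proof (inner_pos H (hplus u (hscal H t v))) as Hq.
    rewrite inner_plus_l, !inner_plus_r, !inner_scal_l, !inner_scal_r, (inner_sym H v u) in Hq.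
    assert (Hq2 : 0 <= inner v v * inner u u - inner u v * inner u v).
    { replace (inner v v * inner u u - inner u v * inner u v)
        with (inner v v * (inner u u + inner u v * t + t * (inner u v + t * inner v v)))
        by (unfold t; field; lra).
      apply Rmult_le_pos; lra. }
    rewrite <- sqrt_mult by lra.
    destruct (Rle_dec (inner u v) 0). { pose proof (sqrt_pos (inner u u * inner v v)). lra. }
    rewrite <- (sqrt_square (inner u v)) by lra.
    apply sqrt_le_1_alt. nra.
Qed.

Lemma norm_triangle {H : Hilbert} (u v : H) : norm (hplus u v) <= norm u + norm v.
Proof.
  pose proof (cauchy_schwarz u v). pose proof (norm_nonneg u). pose proof (norm_nonneg v).
  unfold norm at 1. rewrite <- (sqrt_square (norm u + norm v)) by lra.
  apply sqrt_le_1_alt.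
  rewrite inner_plus_l, !inner_plus_r, (inner_sym H v u).
  assert (norm u * norm u = inner u u) by (unfold norm; apply sqrt_sqrt, inner_pos).
  assert (norm v * norm v = inner v v) by (unfold norm; apply sqrt_sqrt, inner_pos).
  nra.
Qed.

Lemma norm_hminus_triangle {H : Hilbert} (x y z : H) :
  norm (hminus x z) <= norm (hminus x y) + norm (hminus y z).
Proof. rewrite <- (hplus_hminus x y z). apply norm_triangle. Qed.

Lemma emul_pos_slope_le (e : ereal) g B D :
  0 <= g -> 0 <= B -> ele (Fin 1) (emul_pos g e) -> ele (emul_pos B e) (Fin D) -> B <= g * D.
Proof. destruct e as [s|]; simpl; intros; [nra | contradiction]. Qed.

Lemma global_min_finite {H : Hilbert} (f : H -> ereal) xs :
  proper f -> global_min f xs -> exists fs, f xs = Fin fs.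
Proof.
  intros [z hz] Hmin. specialize (Hmin z).
  destruct (f xs) as [fs|]; [eauto|]. destruct (f z); simpl in Hmin; [contradiction | congruence].
Qed.

Section Desingularizing.
Variables (eta0 : R) (phi dphi : R -> R).
Hypothesis Hdes : desingularizing eta0 phi dphi.

Lemma desingularizing_phi_nonneg t : 0 <= t < eta0 -> 0 <= phi t.
Proof. apply Hdes. Qed.

Lemma desingularizing_dphi_pos t : 0 < t < eta0 -> 0 < dphi t.
Proof. apply Hdes. Qed.

Lemma desingularizing_tangent s t :
  0 <= s < eta0 -> 0 < t < eta0 -> phi s <= phi t + dphi t * (s - t).
Proof.
  destruct Hdes as (_ & _ & _ & _ & Hconc & Hd). intros Hs Ht.
  destruct (Req_dec s t) as [->|Hne]. { lra. }
  apply Rnot_lt_le; intro Hlt.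
  (* a chord from t towards s with slope above dphi t contradicts the derivative at t *)
  set (e := phi s - phi t - dphi t * (s - t)).
  assert (He0 : 0 < e) by (unfold e; lra).
  assert (Hst : 0 < Rabs (s - t)) by (apply Rabs_pos_lt; lra).
  destruct (proj1 (Hd t Ht) (e / (2 * Rabs (s - t)))) as [del Hdel].
  { apply Rdiv_lt_0_compat; lra. }
  pose proof (cond_pos del) as Hdelp.
  set (lam := Rmin 1 (del / (2 * Rabs (s - t)))).
  assert (Hl0 : 0 < lam) by (apply Rmin_glb_lt; [lra | apply Rdiv_lt_0_compat; lra]).
  assert (Hl1 : lam <= 1) by apply Rmin_l.
  assert (Hl2 : lam <= del / (2 * Rabs (s - t))) by apply Rmin_r.
  set (h := lam * (s - t)).
  assert (Hh0 : h <> 0) by (apply Rmult_integral_contrapositive; split; lra).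
  assert (Hhabs : Rabs h = lam * Rabs (s - t)) by (unfold h; rewrite Rabs_mult, Rabs_pos_eq; lra).
  assert (Hhd : Rabs h < del).
  { rewrite Hhabs. apply Rle_lt_trans with (del / (2 * Rabs (s - t)) * Rabs (s - t)).
    - apply Rmult_le_compat_r; lra.
    - replace (del / (2 * Rabs (s - t)) * Rabs (s - t)) with (del / 2) by (field; lra). lra. }
  specialize (Hdel h Hh0 Hhd).
  pose proof (Hconc s t lam Hs (conj (Rlt_le _ _ (proj1 Ht)) (proj2 Ht))
                (conj (Rlt_le _ _ Hl0) Hl1)) as Hc.
  replace (lam * s + (1 - lam) * t) with (t + h) in Hc by (unfold h; ring).
  set (q := (phi (t + h) - phi t) / h - dphi t) in Hdel.
  assert (Hqh : q * h = phi (t + h) - phi t - dphi t * h) by (unfold q; field; auto).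
  assert (Hq2 : Rabs (q * h) < lam * e / 2).
  { rewrite Rabs_mult, Hhabs.
    apply Rlt_le_trans with (e / (2 * Rabs (s - t)) * (lam * Rabs (s - t))).
    - apply Rmult_lt_compat_r; [apply Rmult_lt_0_compat; lra | exact Hdel].
    - right. field. lra. }
  pose proof (Rle_abs (q * h)).
  assert (lam * (phi s - phi t) = dphi t * h + lam * e) by (unfold h, e; ring).
  assert (0 < lam * e) by (apply Rmult_lt_0_compat; lra).
  lra.
Qed.

Lemma desingularizing_dphi_antitone t u : 0 < t -> t <= u -> u < eta0 -> dphi u <= dphi t.
Proof.
  intros Ht Htu Hu.
  pose proof (desingularizing_tangent u t ltac:(lra) ltac:(lra)).
  pose proof (desingularizing_tangent t u ltac:(lra) ltac:(lra)).
  destruct (Req_dec t u) as [->|]; [lra | nra].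
Qed.

Lemma desingularizing_small_level c : 0 < c ->
  exists eta, 0 < eta <= eta0 /\ forall t, 0 <= t < eta -> phi t < c.
Proof.
  destruct Hdes as (Heta0 & Hphi0 & _ & Hcont & _). intros Hc.
  destruct (Hcont 0 (conj (Rle_refl 0) Heta0) c Hc) as (dp & Hdp & Hsmall).
  exists (Rmin eta0 dp). split; [split; [apply Rmin_glb_lt; lra | apply Rmin_l]|].
  intros t Ht. pose proof (Rmin_l eta0 dp). pose proof (Rmin_r eta0 dp).
  specialize (Hsmall t ltac:(lra) ltac:(rewrite Rminus_0_r, Rabs_pos_eq; lra)).
  rewrite Hphi0, Rminus_0_r in Hsmall. pose proof (Rle_abs (phi t)). lra.
Qed.

Lemma desingularized_length_step v1 v2 A B M D e :
  0 <= v2 -> v2 + A * e ^ 2 <= v1 -> v1 < eta0 -> 0 < A -> 0 < B -> 1 <= M * A * B ->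
  0 <= e -> 0 <= D -> (0 < v1 -> B <= dphi v1 * D) ->
  2 * e <= D + M * (phi v1 - phi v2).
Proof.
  intros Hv2 Hdec Hv1 HA HB HMAB He HD Hslope.
  assert (HM : 0 < M).
  { assert (0 < A * B) by (apply Rmult_lt_0_compat; lra).
    destruct (Rle_lt_dec M 0); [|lra]. rewrite Rmult_assoc in HMAB. nra. }
  assert (Hae : 0 <= A * e ^ 2) by (apply Rmult_le_pos; [lra | apply pow2_ge_0]).
  destruct (Rle_lt_dec v1 0) as [Hv10 | Hv1pos].
  - assert (e = 0).
    { destruct (Req_dec e 0) as [|Hne]; [assumption|].
      assert (0 < A * e ^ 2) by (apply Rmult_lt_0_compat; [lra | apply pow_lt; lra]). lra. }
    subst e.
    replace v2 with v1 by lra. lra.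
  - set (g := dphi v1) in Hslope.
    assert (Hg : 0 < g) by (apply desingularizing_dphi_pos; lra).
    pose proof (desingularizing_tangent v2 v1 ltac:(lra) ltac:(lra)) as Htan.
    set (P := phi v1 - phi v2).
    assert (HP : g * (A * e ^ 2) <= P).
    { assert (g * (A * e ^ 2) <= g * (v1 - v2)) by (apply Rmult_le_compat_l; lra).
      unfold P. fold g in Htan. lra. }
    specialize (Hslope Hv1pos).
    assert (HDpos : 0 < D) by nra.
    assert (Hsq : e ^ 2 <= M * D * P).
    { assert (e ^ 2 <= M * A * B * e ^ 2) by (pose proof (pow2_ge_0 e); nra).
      assert (M * A * B * e ^ 2 <= M * D * (g * (A * e ^ 2))).
      { replace (M * D * (g * (A * e ^ 2))) with (M * A * e ^ 2 * (g * D)) by ring.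
        replace (M * A * B * e ^ 2) with (M * A * e ^ 2 * B) by ring.
        apply Rmult_le_compat_l; [apply Rmult_le_pos; nra | lra]. }
      assert (M * D * (g * (A * e ^ 2)) <= M * D * P) by (apply Rmult_le_compat_l; nra).
      lra. }
    pose proof (pow2_ge_0 (D - e)).
    apply Rmult_le_reg_r with D; [lra|]. nra.
Qed.

End Desingularizing.

(* The real shadow of a descent sequence [x] near the minimiser [xs]:
   [v k = f (x k) - f xs], [d k = norm (x (S k) - x k)] and [r k = norm (x k - xs)]. *)
Set Implicit Arguments.
Record kl_descent (eta0 : R) (phi dphi : R -> R) (v d r a b : nat -> R) (M delta : R) : Prop := {
  kd_desingularizing : desingularizing eta0 phi dphi;
  kd_v_nonneg : forall k, 0 <= v k;
  kd_v0 : v 0%nat < eta0;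
  kd_decrease : forall k, v (S k) + a k * d k ^ 2 <= v k;
  kd_a_pos : forall k, 0 < a k;
  kd_d_nonneg : forall k, 0 <= d k;
  kd_b_pos : forall k, 0 < b (S k);
  kd_ab : forall k, (1 <= k)%nat -> 1 / (a k * b k) <= M;
  kd_slope : forall j, r (S j) < delta -> 0 < v (S j) < eta0 -> b (S j) <= dphi (v (S j)) * d j;
  kd_r_step : forall k, r (S k) <= r k + d k;
  kd_start : r 0%nat + 2 * d 0%nat + M * phi (v 1%nat) < delta;
  kd_b_divergent : forall B, exists N, B < sum_f_R0 (fun k => b (S k)) N }.
Unset Implicit Arguments.

Section KLDescent.
Context {eta0 : R} {phi dphi : R -> R} {v d r a b : nat -> R} {M delta : R}.
Hypothesis K : kl_descent eta0 phi dphi v d r a b M delta.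

Let Hdes := kd_desingularizing K.

Lemma kl_descent_M_ab k : (1 <= k)%nat -> 1 <= M * a k * b k.
Proof.
  intro Hk. destruct k as [|k]; [lia|].
  pose proof (kd_ab K Hk). pose proof (kd_a_pos K (S k)). pose proof (kd_b_pos K k).
  assert (0 < a (S k) * b (S k)) by (apply Rmult_lt_0_compat; lra).
  replace (M * a (S k) * b (S k)) with (M * (a (S k) * b (S k))) by ring.
  replace 1 with (1 / (a (S k) * b (S k)) * (a (S k) * b (S k))) at 1 by (field; lra).
  apply Rmult_le_compat_r; lra.
Qed.

Lemma kl_descent_M_pos : 0 < M.
Proof.
  pose proof (kd_ab K (le_n 1)). pose proof (kd_a_pos K 1). pose proof (kd_b_pos K 0).
  assert (0 < 1 / (a 1%nat * b 1%nat)) by (apply Rdiv_lt_0_compat, Rmult_lt_0_compat; lra).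
  lra.
Qed.

Lemma kl_descent_v_antitone k n : (k <= n)%nat -> v n <= v k.
Proof.
  induction 1 as [|n _ IH]; [lra|].
  pose proof (kd_decrease K n). pose proof (kd_a_pos K n).
  assert (0 <= a n * d n ^ 2) by (apply Rmult_le_pos; [lra | apply pow2_ge_0]). lra.
Qed.

Lemma kl_descent_v_lt k : v k < eta0.
Proof. pose proof (kl_descent_v_antitone 0 k (Nat.le_0_l k)). pose proof (kd_v0 K). lra. Qed.

Lemma kl_descent_length_step j : r (S j) < delta ->
  2 * d (S j) <= d j + M * (phi (v (S j)) - phi (v (S (S j)))).
Proof.
  intro Hr.
  apply (desingularized_length_step _ _ _ Hdes _ _ (a (S j)) (b (S j)));
    [apply (kd_v_nonneg K) | apply (kd_decrease K) | apply kl_descent_v_lt | apply (kd_a_pos K)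
    | apply (kd_b_pos K) | apply kl_descent_M_ab; lia | apply (kd_d_nonneg K)
    | apply (kd_d_nonneg K) |].
  intro Hv. apply (kd_slope K j Hr). split; [lra | apply kl_descent_v_lt].
Qed.

Lemma kl_descent_length_telescope n : (forall k, (k <= n)%nat -> r k < delta) ->
  sum_f_R0 d n + d n <= 2 * d 0%nat + M * (phi (v 1%nat) - phi (v (S n))).
Proof.
  induction n as [|n IH]; intro Hball; simpl; [lra|].
  pose proof (IH (fun k Hk => Hball k (le_S _ _ Hk))).
  pose proof (kl_descent_length_step n (Hball (S n) (le_n _))). lra.
Qed.

Lemma kl_descent_r_le n : r (S n) <= r 0%nat + sum_f_R0 d n.
Proof.
  induction n as [|n IH]; simpl; [apply (kd_r_step K)|].
  pose proof (kd_r_step K (S n)). lra.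
Qed.

Lemma kl_descent_M_phi_nonneg k : 0 <= M * phi (v k).
Proof.
  apply Rmult_le_pos; [pose proof kl_descent_M_pos; lra|].
  apply (desingularizing_phi_nonneg _ _ _ Hdes). split; [apply (kd_v_nonneg K) | apply kl_descent_v_lt].
Qed.

Lemma kl_descent_in_ball n : r n < delta.
Proof.
  enough (Hall : forall k, (k <= n)%nat -> r k < delta) by (apply Hall; lia).
  induction n as [|n IH]; intros k Hk.
  - replace k with 0%nat by lia. pose proof (kd_start K). pose proof (kd_d_nonneg K 0).
    pose proof (kl_descent_M_phi_nonneg 1). lra.
  - destruct (Nat.eq_dec k (S n)) as [->|]; [|apply IH; lia].
    pose proof (kl_descent_length_telescope n IH). pose proof (kl_descent_r_le n).
    pose proof (kd_start K). pose proof (kd_d_nonneg K n). pose proof (kl_descent_M_phi_nonneg (S n)).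
    lra.
Qed.

Lemma kl_descent_length_bounded n : sum_f_R0 d n <= 2 * d 0%nat + M * phi (v 1%nat).
Proof.
  pose proof (kl_descent_length_telescope n (fun k _ => kl_descent_in_ball k)).
  pose proof (kd_d_nonneg K n). pose proof (kl_descent_M_phi_nonneg (S n)). lra.
Qed.

Lemma kl_descent_length_cv : exists L, Un_cv (sum_f_R0 d) L.
Proof.
  destruct (growing_cv (sum_f_R0 d)) as [L HL]; [| |exists L; exact HL].
  - intro n. simpl. pose proof (kd_d_nonneg K (S n)). lra.
  - exists (2 * d 0%nat + M * phi (v 1%nat)). intros y [n ->]. apply kl_descent_length_bounded.
Qed.

Lemma kl_descent_v_cv0 eps : 0 < eps -> exists N, forall n, (N <= n)%nat -> v n < eps.
Proof.
  intro Heps. destruct (classic (exists N, v N < eps)) as [[N HN]|Hnone].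
  - exists N. intros n Hn. pose proof (kl_descent_v_antitone N n Hn). lra.
  - exfalso.
    assert (Hge : forall k, eps <= v k) by (intro k; apply Rnot_lt_le; intro; apply Hnone; eauto).
    assert (Heps0 : eps < eta0) by (pose proof (Hge 0%nat); pose proof (kd_v0 K); lra).
    assert (Hw : 0 < dphi eps) by (apply (desingularizing_dphi_pos _ _ _ Hdes); lra).
    assert (Hbk : forall k, b (S k) <= dphi eps * d k).
    { intro k. pose proof (Hge (S k)). pose proof (kl_descent_v_lt (S k)).
      pose proof (kd_slope K k (kl_descent_in_ball (S k)) ltac:(lra)).
      pose proof (desingularizing_dphi_antitone _ _ _ Hdes eps (v (S k)) Heps ltac:(lra) ltac:(lra)).
      pose proof (kd_d_nonneg K k). nra. }
    assert (Hsum : forall N, sum_f_R0 (fun k => b (S k)) N <= dphi eps * sum_f_R0 d N).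
    { induction N as [|N IH]; simpl; [apply Hbk|]. pose proof (Hbk (S N)). lra. }
    destruct (kd_b_divergent K (dphi eps * (2 * d 0%nat + M * phi (v 1%nat)))) as [N HN].
    pose proof (Hsum N).
    pose proof (Rmult_le_compat_l (dphi eps) _ _ (Rlt_le _ _ Hw) (kl_descent_length_bounded N)). lra.
Qed.

End KLDescent.

Section HilbertSequences.
Context {H : Hilbert}.

Lemma norm_hminus_le_length (x : nat -> H) n m : (n <= m)%nat ->
  norm (hminus (x (S m)) (x (S n))) <=
  sum_f_R0 (fun k => norm (hminus (x (S k)) (x k))) m -
  sum_f_R0 (fun k => norm (hminus (x (S k)) (x k))) n.
Proof.
  induction 1 as [|m _ IH]; [rewrite norm_hminus_self; lra|].
  pose proof (norm_hminus_triangle (x (S (S m))) (x (S m)) (x (S n))). simpl. lra.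
Qed.

Lemma hcv_of_finite_length (x : nat -> H) L :
  Un_cv (sum_f_R0 (fun k => norm (hminus (x (S k)) (x k)))) L -> exists l, hcv x l.
Proof.
  intro HL. apply (hcomplete H x). intros eps Heps.
  destruct (HL (eps / 2) ltac:(lra)) as [N HN]. exists (S N). intros m n Hm Hn.
  change (norm (hminus (x m) (x n)) < eps).
  destruct m as [|m]; [lia|]. destruct n as [|n]; [lia|].
  pose proof (HN m ltac:(lia)) as Hm'. pose proof (HN n ltac:(lia)) as Hn'.
  unfold R_dist in Hm', Hn'. apply Rabs_def2 in Hm'. apply Rabs_def2 in Hn'.
  destruct (Nat.le_ge_cases n m) as [Hnm|Hmn].
  - pose proof (norm_hminus_le_length x n m Hnm). lra.
  - rewrite norm_hminus_sym. pose proof (norm_hminus_le_length x m n Hmn). lra.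
Qed.

Lemma lsc_le_of_limsup (f : H -> ereal) (x : nat -> H) (F : nat -> R) l L :
  lsc f -> hcv x l -> (forall k, f (x k) = Fin (F k)) ->
  (forall eps, 0 < eps -> exists N, forall n, (N <= n)%nat -> F n < L + eps) ->
  ele (f l) (Fin L).
Proof.
  intros Hlsc Hx HF Hlim.
  assert (Habove : forall s, L < s -> ~ elt (Fin s) (f l)).
  { intros s Hs Hel. destruct (Hlsc l s Hel) as (dl & Hdl & Hnear).
    destruct (Hx dl Hdl) as [N1 HN1]. destruct (Hlim (s - L) ltac:(lra)) as [N2 HN2].
    specialize (Hnear _ (HN1 (max N1 N2) (Nat.le_max_l _ _))).
    specialize (HN2 (max N1 N2) (Nat.le_max_r _ _)).
    rewrite HF in Hnear. simpl in Hnear. lra. }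
  revert Habove. destruct (f l) as [w|]; simpl; intro Habove.
  - apply Rnot_lt_le. intro Hw. apply (Habove ((L + w) / 2)); simpl; lra.
  - apply (Habove (L + 1)); simpl; [lra | exact I].
Qed.

End HilbertSequences.

Lemma descent_values_finite (u : nat -> ereal) (c : nat -> R) :
  u 0%nat <> PInf -> (forall k, ele (eplus (u (S k)) (c k)) (u k)) ->
  exists F, forall k, u k = Fin (F k).
Proof.
  intros H0 Hdesc. exists (fun k => match u k with Fin r => r | PInf => 0 end).
  induction k as [|k IH]; [destruct (u 0%nat); [reflexivity | congruence]|].
  specialize (Hdesc k). rewrite IH in Hdesc.
  destruct (u (S k)); simpl in Hdesc; [reflexivity | contradiction].
Qed.

Lemma KL_at_slope_le {H : Hilbert} (f : H -> ereal) xs fs eta0 dphi delta (y : H) r B D :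
  (forall x, Gamma f xs eta0 delta x -> forall r s, f x = Fin r -> f xs = Fin s ->
     ele (Fin 1) (emul_pos (dphi (r - s)) (lazy_slope f x))) ->
  f xs = Fin fs -> f y = Fin r -> norm (hminus y xs) < delta -> 0 < r - fs < eta0 ->
  0 <= dphi (r - fs) -> 0 <= B -> ele (emul_pos B (lazy_slope f y)) (Fin D) ->
  B <= dphi (r - fs) * D.
Proof.
  intros HKL Hxs Hy Hd Hr Hg HB Hslope.
  apply (emul_pos_slope_le (lazy_slope f y)); auto.
  apply (HKL y); auto. unfold Gamma. rewrite Hy, Hxs. simpl. repeat split; lra.
Qed.

Lemma kl_descent_of_iterates {H : Hilbert} (f : H -> ereal) xs fs eta0 phi dphi delta
    (x : nat -> H) (F a b : nat -> R) M :
  desingularizing eta0 phi dphi ->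
  (forall y, Gamma f xs eta0 delta y -> forall r s, f y = Fin r -> f xs = Fin s ->
     ele (Fin 1) (emul_pos (dphi (r - s)) (lazy_slope f y))) ->
  global_min f xs -> f xs = Fin fs -> (forall k, f (x k) = Fin (F k)) ->
  (forall k, 0 < a k) ->
  (forall k, ele (eplus (f (x (S k))) (a k * (norm (hminus (x (S k)) (x k)))^2)) (f (x k))) ->
  (forall k, 0 < b (S k)) ->
  (forall k, ele (emul_pos (b (S k)) (lazy_slope f (x (S k))))
                 (Fin (norm (hminus (x (S k)) (x k))))) ->
  (forall B, exists N, B < sum_f_R0 (fun k => b (S k)) N) ->
  (forall k, (1 <= k)%nat -> 1 / (a k * b k) <= M) ->
  F 0%nat - fs < eta0 ->
  norm (hminus (x 0%nat) xs) + 2 * norm (hminus (x 1%nat) (x 0%nat)) + M * phi (F 1%nat - fs) < delta ->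
  kl_descent eta0 phi dphi (fun k => F k - fs) (fun k => norm (hminus (x (S k)) (x k)))
    (fun k => norm (hminus (x k) xs)) a b M delta.
Proof.
  intros Hdes HKL Hmin Hfs HF Ha H1 Hb H2 Hdiv HMab Hv0 Hstart.
  split; auto.
  - intro k. pose proof (Hmin (x k)) as Hm. rewrite Hfs, HF in Hm. simpl in Hm. lra.
  - intro k. pose proof (H1 k) as Hk. rewrite !HF in Hk. simpl in Hk. lra.
  - intro k. apply norm_nonneg.
  - intros j Hr Hv. apply (KL_at_slope_le f xs fs eta0 dphi delta _ _ _ _ HKL Hfs (HF _) Hr Hv).
    + apply Rlt_le, (desingularizing_dphi_pos _ _ _ Hdes), Hv.
    + apply Rlt_le, Hb.
    + apply H2.
  - intro k. rewrite Rplus_comm. apply norm_hminus_triangle.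
Qed.

Lemma lsc_limit_global_min {H : Hilbert} (f : H -> ereal) xs fs (x : nat -> H) (F : nat -> R) xbar :
  lsc f -> global_min f xs -> f xs = Fin fs -> hcv x xbar -> (forall k, f (x k) = Fin (F k)) ->
  (forall eps, 0 < eps -> exists N, forall n, (N <= n)%nat -> F n - fs < eps) ->
  global_min f xbar /\ f_converges f x xbar.
Proof.
  intros Hlsc Hmin Hfs Hx HF Hlim.
  assert (Hlow : forall k, fs <= F k)
    by (intro k; pose proof (Hmin (x k)) as Hm; rewrite Hfs, HF in Hm; exact Hm).
  assert (Hfbar : f xbar = Fin fs).
  { pose proof (Hmin xbar) as Hge. rewrite Hfs in Hge.
    assert (Hle : ele (f xbar) (Fin fs)).
    { apply (lsc_le_of_limsup f x F xbar fs Hlsc Hx HF). intros eps Heps.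
      destruct (Hlim eps Heps) as [N HN]. exists N. intros n Hn. specialize (HN n Hn). lra. }
    destruct (f xbar); simpl in Hge, Hle; [f_equal; lra | contradiction]. }
  split; [|split; [exact Hx|]].
  - intro y. rewrite Hfbar, <- Hfs. apply Hmin.
  - rewrite Hfbar. intros eps Heps. destruct (Hlim eps Heps) as [N HN].
    exists N. intros n Hn. exists (F n). split; [apply HF|].
    specialize (HN n Hn). pose proof (Hlow n). rewrite Rabs_pos_eq; lra.
Qed.

Lemma lt_of_weighted_sq_lt al A e c :
  0 < al -> al <= A -> 0 <= e -> 0 <= c -> A * e ^ 2 < al * c ^ 2 -> e < c.
Proof.
  intros Hal HA He Hc Hlt. apply Rnot_le_lt. intro Hce.
  assert (c ^ 2 <= e ^ 2) by (apply pow_incr; lra).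
  assert (al * c ^ 2 <= al * e ^ 2) by (apply Rmult_le_compat_l; lra).
  assert (al * e ^ 2 <= A * e ^ 2) by (apply Rmult_le_compat_r; [apply pow2_ge_0 | lra]).
  lra.
Qed.

Theorem mainTheorem3 (H : Hilbert) (f : H -> ereal) (xs : H)
  (Hprop : proper f) (Hlsc : lsc f) (Hmin : global_min f xs) (HKL : KL_at f xs)
  (a_low M : R) (Ha_low : 0 < a_low) (HM : 0 < M) :
  exists gamma eta, 0 < gamma /\ 0 < eta /\
    forall (x : nat -> H) (a b : nat -> R),
      (* H1 *)
      (forall k, 0 < a k) ->
      (forall k, ele (eplus (f (x (S k))) (a k * (norm (hminus (x (S k)) (x k)))^2)) (f (x k))) ->
      (* H2 with eps_k = 0 *)
      (forall k, 0 < b (S k)) ->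
      (forall k, ele (emul_pos (b (S k)) (lazy_slope f (x (S k))))
                     (Fin (norm (hminus (x (S k)) (x k))))) ->
      (* H3 *)
      (forall k, a_low <= a k) ->
      (forall B, exists N, B < sum_f_R0 (fun k => b (S k)) N) ->
      (forall k, (1 <= k)%nat -> 1 / (a k * b k) <= M) ->
      Gamma_relaxed f xs eta gamma (x 0%nat) ->
      exists xbar, global_min f xbar /\ f_converges f x xbar /\
        exists Ssum, Un_cv (fun N => sum_f_R0 (fun k => norm (hminus (x (S k)) (x k))) N) Ssum.
Proof.
  destruct HKL as (eta0 & phi & dphi & delta & Hdes & Hdelta & HKLi).
  destruct (global_min_finite f xs Hprop Hmin) as [fs Hfs].
  destruct (desingularizing_small_level _ _ _ Hdes (delta / (4 * M)))
    as (eta1 & [Heta1 Heta10] & Hsmall).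
  { apply Rdiv_lt_0_compat; lra. }
  (* [eta] makes both the first step (via H1) and [M * phi] at the first value small *)
  set (eta := Rmin eta1 (a_low * (delta / 8) ^ 2)).
  assert (Heta_le1 : eta <= eta1) by apply Rmin_l.
  assert (Heta_le2 : eta <= a_low * (delta / 8) ^ 2) by apply Rmin_r.
  assert (Heta : 0 < eta)
    by (apply Rmin_glb_lt; [lra | apply Rmult_lt_0_compat; [lra | apply pow_lt; lra]]).
  exists (delta / 4), eta. split; [lra|]. split; [exact Heta|].
  intros x a b Ha H1 Hb H2 Hal Hdiv HMab (Hx0 & _ & Hfx0).
  destruct (descent_values_finite (fun k => f (x k)) _ ltac:(intro E; rewrite E in Hfx0; exact Hfx0) H1)
    as [F HF].
  rewrite Hfs, HF in Hfx0. simpl in Hfx0.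
  assert (Hstep0 : F 1%nat + a 0%nat * norm (hminus (x 1%nat) (x 0%nat)) ^ 2 <= F 0%nat)
    by (pose proof (H1 0%nat) as Hk; rewrite !HF in Hk; exact Hk).
  assert (Hlow1 : fs <= F 1%nat) by (pose proof (Hmin (x 1%nat)) as Hm; rewrite Hfs, HF in Hm; exact Hm).
  assert (0 <= a 0%nat * norm (hminus (x 1%nat) (x 0%nat)) ^ 2)
    by (apply Rmult_le_pos; [apply Rlt_le, Ha | apply pow2_ge_0]).
  assert (Hd0 : norm (hminus (x 1%nat) (x 0%nat)) < delta / 8).
  { apply (lt_of_weighted_sq_lt a_low (a 0%nat)); [lra | apply Hal | apply norm_nonneg | lra | lra]. }
  assert (Hphi1 : M * phi (F 1%nat - fs) < delta / 4).
  { replace (delta / 4) with (M * (delta / (4 * M))) by (field; lra).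
    apply Rmult_lt_compat_l; [lra | apply Hsmall; lra]. }
  pose proof (kl_descent_of_iterates f xs fs eta0 phi dphi delta x F a b M
                Hdes HKLi Hmin Hfs HF Ha H1 Hb H2 Hdiv HMab ltac:(lra) ltac:(lra)) as K.
  destruct (kl_descent_length_cv K) as [L HL].
  destruct (hcv_of_finite_length x L HL) as [xbar Hxbar].
  destruct (lsc_limit_global_min f xs fs x F xbar Hlsc Hmin Hfs Hxbar HF (kl_descent_v_cv0 K))
    as [Hgmin Hfcv].
  exists xbar. split; [exact Hgmin|]. split; [exact Hfcv|]. exists L. exact HL.
Qed.
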